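(* Let $(\mathcal{S},\mathcal{R})$ be an $r$-complete positive presentation. Then the monoid $\mathrm{Mon}(\mathcal{S};\mathcal{R})$ admits left cancellation (i.e. $xy=xz$ implies $y=z$) if and only if $u^{-1}v\curvearrowright_r\varepsilon$ holds for every relation of $\mathcal{R}$ of the form $su=sv$ with $s\in\mathcal{S}$ and $u,v\in\mathcal{S}^*$. In particular, a sufficient condition for $\mathrm{Mon}(\mathcal{S};\mathcal{R})$ to admit left cancellation is that $\mathcal{R}$ contains no relation $su=sv$ with $s\in\mathcal{S}$ and $u\neq v$.
   Context: A positive presentation is a pair $(\mathcal{S},\mathcal{R})$ where $\mathcal{S}$ is a nonempty set of letters and $\mathcal{R}$ is a family of relations $u=v$, i.e. unordered pairs $\{u,v\}$ of nonempty words in the free monoid $\mathcal{S}^*$. $\varepsilon$ denotes the empty word; $\equiv$ is the smallest congruence on $\mathcal{S}^*$ containing all pairs of $\mathcal{R}$, and $\mathrm{Mon}(\mathcal{S};\mathcal{R})=\mathcal{S}^*/{\equiv}$. Let $\mathcal{S}^{-1}=\{s^{-1}:s\in\mathcal{S}\}$ be a disjoint copy of $\mathcal{S}$; for $u\in\mathcal{S}^*$, $u^{-1}$ is obtained by reversing the order of the letters of $u$ and replacing each $s$ by $s^{-1}$. Right reversing: for words $\mathbf{w},\mathbf{w}'$ on $\mathcal{S}\cup\mathcal{S}^{-1}$ we write $\mathbf{w}\curvearrowright_r\mathbf{w}'$ if $\mathbf{w}'$ is obtained from $\mathbf{w}$ by a finite (possibly empty) sequence of steps, each of which either deletes a subword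 $u^{-1}u$ with $u\in\mathcal{S}^*$ nonempty, or replaces a subword $u^{-1}v$ with $u,v\in\mathcal{S}^*$ nonempty by a word $v'u'^{-1}$ with $u',v'\in\mathcal{S}^*$ such that $uv'=vu'$ is a relation of $\mathcal{R}$. $(\mathcal{S},\mathcal{R})$ is $r$-complete if for all $u,v,u',v'\in\mathcal{S}^*$ with $uv'\equiv vu'$ there exist $u'',v'',w\in\mathcal{S}^*$ with $u^{-1}v\curvearrowright_r v''u''^{-1}$, $u'\equiv u''w$ and $v'\equiv v''w$. *)

From Stdlib Require Import List.
Import ListNotations.
Set Implicit Arguments.

Section Presentations.
Variable S : Type.

(* A family of relations on S^* is given as a predicate R : list S -> list S -> Prop;
   a relation u = v is an UNORDERED pair, so "u = v is a relation of R" means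
   R u v or R v u. *)
Definition is_rel (R : list S -> list S -> Prop) (u v : list S) : Prop :=
  R u v \/ R v u.

Definition positive_relations (R : list S -> list S -> Prop) : Prop :=
  forall u v, R u v -> u <> [] /\ v <> [].

Inductive cong (R : list S -> list S -> Prop) : list S -> list S -> Prop :=
| cong_base : forall u v, R u v -> cong R u v
| cong_refl : forall u, cong R u u
| cong_sym : forall u v, cong R u v -> cong R v u
| cong_trans : forall u v w, cong R u v -> cong R v w -> cong R u w
| cong_ctx : forall x y u v, cong R u v -> cong R (x ++ u ++ y) (x ++ v ++ y).

Definition left_cancellative (R : list S -> list S -> Prop) : Prop :=
  forall x y z, cong R (x ++ y) (x ++ z) -> cong R y z.

Inductive sletter : Type := Pos (s : S) | Neg (s : S).

Definition pos (u : list S) : list sletter := map Pos u.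
(* u^{-1}: reverse the word and replace each s by s^{-1} *)
Definition neg (u : list S) : list sletter := rev (map Neg u).

Inductive rstep (R : list S -> list S -> Prop) : list sletter -> list sletter -> Prop :=
| rstep_del : forall w1 w2 u, u <> [] ->
    rstep R (w1 ++ neg u ++ pos u ++ w2) (w1 ++ w2)
| rstep_rel : forall w1 w2 u v u' v', u <> [] -> v <> [] ->
    is_rel R (u ++ v') (v ++ u') ->
    rstep R (w1 ++ neg u ++ pos v ++ w2) (w1 ++ pos v' ++ neg u' ++ w2).

Inductive rrev (R : list S -> list S -> Prop) : list sletter -> list sletter -> Prop :=
| rrev_refl : forall w, rrev R w w
| rrev_step : forall w1 w2 w3, rstep R w1 w2 -> rrev R w2 w3 -> rrev R w1 w3.

Definition r_complete (R : list S -> list S -> Prop) : Prop :=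
  forall u v u' v', cong R (u ++ v') (v ++ u') ->
    exists u'' v'' w,
      rrev R (neg u ++ pos v) (pos v'' ++ neg u'') /\
      cong R u' (u'' ++ w) /\ cong R v' (v'' ++ w).

End Presentations.

(* Right reversing is sound: read a signed word as a walk in the Cayley graph
   of Mon(S;R), positive letters forward and negative letters backward; every
   reversing step preserves the endpoints of such walks, so u^-1 v ~> v'' u''^-1
   gives u v'' == v u''.  A word v'' u''^-1 admits no reversing step, so
   reversing s^-1 s either erases it or applies a single relation s v'' = s u''
   and stops.  Under the hypothesis this relation gives v'' == u'', and
   r-completeness applied to s y == s z then yields y == v'' w == u'' w == z:
   letters cancel one at a time.  Conversely, cancellation turns s u == s v into
   u == v, and r-completeness with u' = v' = eps gives u^-1 v ~> v'' u''^-1 with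
   eps == u'' w and eps == v'' w, which forces u'' = v'' = eps since in a
   positive presentation only eps is equivalent to eps. *)

From Stdlib Require Import List Lia.
Import ListNotations.
Set Implicit Arguments.
Unset Strict Implicit.

Section Reversing.
Variable S : Type.
Variable R : list S -> list S -> Prop.

Lemma cong_app_r u v y : cong R u v -> cong R (u ++ y) (v ++ y).
Proof. intro H. exact (cong_ctx [] y H). Qed.

Lemma cong_app_l x u v : cong R u v -> cong R (x ++ u) (x ++ v).
Proof. intro H. pose proof (cong_ctx x [] H) as H'. rewrite !app_nil_r in H'. exact H'. Qed.

Lemma cong_of_is_rel u v : is_rel R u v -> cong R u v.
Proof. intros [H | H]; [apply cong_base | apply cong_sym, cong_base]; exact H. Qed.

Lemma cong_nil_iff : positive_relations R ->
  forall u v, cong R u v -> (u = [] <-> v = []).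
Proof.
  intros HR u v H. induction H as [u v Huv | | | | x y u v _ IH]; try tauto.
  - apply HR in Huv. tauto.
  - split; intro E; apply app_eq_nil in E as [-> E]; apply app_eq_nil in E as [E ->];
      [rewrite (proj1 IH E) | rewrite (proj2 IH E)]; reflexivity.
Qed.

(* [walk w x y]: starting from the class of [x] in the Cayley graph of Mon(S;R)
   and following [w] (positive letters forward, negative letters backward), one
   can end in the class of [y]. *)
Fixpoint walk (w : list (sletter S)) (x y : list S) : Prop :=
  match w with
  | [] => cong R x y
  | Pos s :: w => walk w (x ++ [s]) y
  | Neg s :: w => exists z, cong R x (z ++ [s]) /\ walk w z y
  end.

Lemma walk_cong_l w x x' y : cong R x x' -> walk w x y -> walk w x' y.
Proof.
  revert x x'; induction w as [|[s|s] w IH]; simpl; intros x x' Hx Hw.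
  - exact (cong_trans (cong_sym Hx) Hw).
  - exact (IH _ _ (cong_app_r [s] Hx) Hw).
  - destruct Hw as (z & Hz & Hw). exists z. split; [|exact Hw].
    exact (cong_trans (cong_sym Hx) Hz).
Qed.

Lemma walk_app w1 : forall w2 x y,
  walk (w1 ++ w2) x y <-> exists m, walk w1 x m /\ walk w2 m y.
Proof.
  induction w1 as [|[s|s] w1 IH]; simpl; intros w2 x y.
  - split.
    + intro H. exists x. split; [apply cong_refl | exact H].
    + intros (m & Hm & H). exact (walk_cong_l (cong_sym Hm) H).
  - apply IH.
  - split.
    + intros (z & Hz & H). apply IH in H as (m & H1 & H2).
      exists m. split; [exists z; split|]; assumption.
    + intros (m & (z & Hz & H1) & H2). exists z. split; [exact Hz|].
      apply IH. exists m. split; assumption.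
Qed.

Lemma walk_pos v : forall x y, walk (pos v) x y <-> cong R (x ++ v) y.
Proof.
  induction v as [|s v IH]; simpl; intros x y.
  - rewrite app_nil_r. tauto.
  - rewrite IH, <- app_assoc. tauto.
Qed.

Lemma neg_cons (a : S) u : neg (a :: u) = neg u ++ [Neg a].
Proof. reflexivity. Qed.

Lemma walk_neg u : forall x y, walk (neg u) x y <-> cong R x (y ++ u).
Proof.
  induction u as [|a u IH]; intros x y.
  - simpl. rewrite app_nil_r. tauto.
  - rewrite neg_cons, walk_app. split.
    + intros (m & H1 & z & Hz & Hzy). apply IH in H1.
      apply (cong_trans H1).
      replace (y ++ a :: u) with ((y ++ [a]) ++ u) by (rewrite <- app_assoc; reflexivity).
      apply cong_app_r, (cong_trans Hz), cong_app_r, Hzy.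
    + intro H. exists (y ++ [a]). split.
      * apply IH. rewrite <- app_assoc. exact H.
      * exists y. split; apply cong_refl.
Qed.

Lemma rstep_walk w w' : rstep R w w' -> forall x y, walk w x y -> walk w' x y.
Proof.
  intros [w1 w2 u _ | w1 w2 u v u' v' _ _ Hrel] x y Hw;
    apply walk_app in Hw as (m1 & H1 & Hw); apply walk_app in Hw as (m2 & H2 & Hw);
    apply walk_app in Hw as (m3 & H3 & H4);
    apply walk_neg in H2; apply walk_pos in H3; apply walk_app; exists m1; split; auto.
  - exact (walk_cong_l (cong_sym (cong_trans H2 H3)) H4).
  - apply walk_app. exists (m1 ++ v'). split; [apply walk_pos, cong_refl|].
    apply walk_app. exists m3. split; [|exact H4].
    apply walk_neg.
    apply (cong_trans (cong_app_r v' H2)). rewrite <- app_assoc.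
    apply (cong_trans (cong_app_l m2 (cong_of_is_rel Hrel))).
    rewrite app_assoc. apply cong_app_r, H3.
Qed.

Lemma rrev_walk w w' : rrev R w w' -> forall x y, walk w x y -> walk w' x y.
Proof.
  induction 1 as [|w1 w2 w3 Hstep _ IH]; auto.
  intros x y H. exact (IH _ _ (rstep_walk Hstep H)).
Qed.

Lemma rrev_sound u v u'' v'' : rrev R (neg u ++ pos v) (pos v'' ++ neg u'') ->
  cong R (u ++ v'') (v ++ u'').
Proof.
  intro H.
  assert (Hw : walk (neg u ++ pos v) u v).
  { apply walk_app. exists []. split; [apply walk_neg | apply walk_pos]; apply cong_refl. }
  apply (rrev_walk H), walk_app in Hw as (m & H1 & H2).
  apply walk_pos in H1. apply walk_neg in H2. exact (cong_trans H1 H2).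
Qed.

Lemma rrev_nil_sound u v : rrev R (neg u ++ pos v) [] -> cong R u v.
Proof.
  intro H. pose proof (rrev_sound (u'' := []) (v'' := []) H) as Huv.
  rewrite !app_nil_r in Huv. exact Huv.
Qed.

Fixpoint negative (w : list (sletter S)) : Prop :=
  match w with [] => True | Neg _ :: w => negative w | Pos _ :: _ => False end.

Fixpoint pos_neg (w : list (sletter S)) : Prop :=
  match w with [] => True | Pos _ :: w => pos_neg w | Neg _ :: w => negative w end.

Lemma negative_app w1 w2 : negative (w1 ++ w2) <-> negative w1 /\ negative w2.
Proof. induction w1 as [|[s|s] w1 IH]; simpl; tauto. Qed.

Lemma negative_neg u : negative (neg u).
Proof.
  induction u as [|a u IH]; simpl; auto.
  rewrite neg_cons, negative_app. simpl. auto.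
Qed.

Lemma pos_neg_of_negative w : negative w -> pos_neg w.
Proof. induction w as [|[s|s] w IH]; simpl; tauto. Qed.

Lemma pos_neg_pos_neg v u : pos_neg (pos v ++ neg u).
Proof. induction v; simpl; auto. apply pos_neg_of_negative, negative_neg. Qed.

Lemma not_pos_neg_Neg_Pos w1 a b w2 : ~ pos_neg (w1 ++ Neg a :: Pos b :: w2).
Proof.
  induction w1 as [|[s|s] w1 IH]; simpl; auto.
  rewrite negative_app. simpl. tauto.
Qed.

Lemma rstep_not_pos_neg w w' : rstep R w w' -> ~ pos_neg w.
Proof.
  assert (Hsplit : forall w1 w2 u v, u <> [] -> v <> [] ->
            ~ pos_neg (w1 ++ neg u ++ pos v ++ w2)).
  { intros w1 w2 [|a u] [|b v] Hu Hv; try congruence.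
    rewrite neg_cons. simpl. rewrite <- !app_assoc, app_assoc.
    apply not_pos_neg_Neg_Pos. }
  destruct 1; apply Hsplit; assumption.
Qed.

Lemma rrev_pos_neg w w' : pos_neg w -> rrev R w w' -> w' = w.
Proof.
  intros Hw H. destruct H as [|w1 w2 w3 Hstep _]; [reflexivity|].
  exfalso. exact (rstep_not_pos_neg Hstep Hw).
Qed.

Lemma neg_inj (u u' : list S) : neg u = neg u' -> u = u'.
Proof.
  unfold neg. intro H. apply (f_equal (@rev _)) in H. rewrite !rev_involutive in H.
  revert u' H. induction u as [|a u IH]; intros [|a' u'] H; try discriminate; [reflexivity|].
  injection H as -> H. f_equal. exact (IH _ H).
Qed.

Lemma pos_neg_inj (v : list S) : forall u v' u',
  pos v ++ neg u = pos v' ++ neg u' -> v = v' /\ u = u'.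
Proof.
  induction v as [|a v IH]; intros u [|a' v'] u' H; simpl in H.
  - split; [reflexivity | apply neg_inj, H].
  - pose proof (negative_neg u) as Hu. rewrite H in Hu. contradiction.
  - pose proof (negative_neg u') as Hu. rewrite <- H in Hu. contradiction.
  - injection H as -> H. apply IH in H as [-> ->]. split; reflexivity.
Qed.

Lemma app_neg_pos_eq_Neg_Pos (s t : S) w1 w2 u v : u <> [] -> v <> [] ->
  w1 ++ neg u ++ pos v ++ w2 = [Neg s; Pos t] ->
  w1 = [] /\ w2 = [] /\ u = [s] /\ v = [t].
Proof.
  intros Hu Hv E.
  assert (L := f_equal (@length _) E).
  unfold neg, pos in L. rewrite !length_app, length_rev, !length_map in L.
  destruct u as [|a [|]], v as [|b [|]]; try congruence; simpl in L;
    destruct w1, w2; simpl in L; try lia.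
  injection E as -> ->. auto.
Qed.

Lemma rstep_Neg_Pos s w : rstep R [Neg s; Pos s] w ->
  w = [] \/ exists u v, is_rel R (s :: v) (s :: u) /\ w = pos v ++ neg u.
Proof.
  intro H. remember [Neg s; Pos s] as w0 eqn:E.
  destruct H as [w1 w2 u Hu | w1 w2 u v u' v' Hu Hv Hrel].
  - left. destruct (app_neg_pos_eq_Neg_Pos Hu Hu E) as (-> & -> & _). reflexivity.
  - right. destruct (app_neg_pos_eq_Neg_Pos Hu Hv E) as (-> & -> & -> & ->).
    exists u', v'. split; [exact Hrel | simpl; rewrite app_nil_r; reflexivity].
Qed.

Lemma rrev_Neg_Pos s u v : rrev R [Neg s; Pos s] (pos v ++ neg u) ->
  (v = [] /\ u = []) \/ is_rel R (s :: v) (s :: u).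
Proof.
  intro H. remember [Neg s; Pos s] as w eqn:Ew. remember (pos v ++ neg u) as w' eqn:Ew'.
  destruct H as [w | w w1 w2 Hstep Hrest]; subst.
  - exfalso. pose proof (pos_neg_pos_neg v u) as Hw. rewrite <- Ew' in Hw. exact Hw.
  - destruct (rstep_Neg_Pos Hstep) as [-> | (u' & v' & Hrel & ->)].
    + left. apply rrev_pos_neg in Hrest; [|exact I].
      exact (pos_neg_inj (v' := []) (u' := []) Hrest).
    + right. apply rrev_pos_neg in Hrest; [|apply pos_neg_pos_neg].
      apply pos_neg_inj in Hrest as [-> ->]. exact Hrel.
Qed.

Lemma rrev_neg_pos_self u : rrev R (neg u ++ pos u) [].
Proof.
  destruct u as [|a u]; [apply rrev_refl|].
  apply rrev_step with (w2 := []); [|apply rrev_refl].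
  pose proof (rstep_del R [] [] (u := a :: u) ltac:(discriminate)) as H.
  rewrite app_nil_r in H. exact H.
Qed.

Lemma left_cancellative_of_letters :
  (forall a y z, cong R (a :: y) (a :: z) -> cong R y z) -> left_cancellative R.
Proof.
  intros Hletter x. induction x as [|a x IH]; intros y z H; [exact H|].
  apply IH, (Hletter a), H.
Qed.

Lemma cancel_letter_of_rrev : r_complete R ->
  (forall s u v, is_rel R (s :: u) (s :: v) -> rrev R (neg u ++ pos v) []) ->
  forall a y z, cong R (a :: y) (a :: z) -> cong R y z.
Proof.
  intros Hc Hrel a y z H.
  destruct (Hc [a] [a] z y H) as (u & v & w & Hrev & Hz & Hy).
  assert (Hvu : cong R v u).
  { destruct (rrev_Neg_Pos Hrev) as [[-> ->] | Hr].
    - apply cong_refl.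
    - exact (rrev_nil_sound (Hrel _ _ _ Hr)). }
  exact (cong_trans Hy (cong_trans (cong_app_r w Hvu) (cong_sym Hz))).
Qed.

Lemma rrev_of_left_cancellative : positive_relations R -> r_complete R ->
  left_cancellative R ->
  forall s u v, is_rel R (s :: u) (s :: v) -> rrev R (neg u ++ pos v) [].
Proof.
  intros HR Hc Hl s u v Hrel.
  assert (Huv : cong R (u ++ []) (v ++ [])).
  { rewrite !app_nil_r. exact (Hl [s] u v (cong_of_is_rel Hrel)). }
  destruct (Hc u v [] [] Huv) as (u'' & v'' & w & Hrev & Hu & Hv).
  assert (Hnil : forall x, cong R [] x -> x = []).
  { intros x Hx. exact (proj1 (cong_nil_iff HR Hx) eq_refl). }
  apply Hnil, app_eq_nil in Hu as [-> _].
  apply Hnil, app_eq_nil in Hv as [-> _].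
  exact Hrev.
Qed.

End Reversing.

Theorem proposition6p1 (S : Type) (R : list S -> list S -> Prop)
  (HS : inhabited S) (HR : positive_relations R) (Hc : r_complete R) :
  (left_cancellative R <->
     (forall (s : S) (u v : list S), is_rel R (s :: u) (s :: v) ->
        rrev R (neg u ++ pos v) []))
  /\
  ((forall (s : S) (u v : list S), is_rel R (s :: u) (s :: v) -> u = v) ->
     left_cancellative R).
Proof.
  split; [split|].
  - exact (rrev_of_left_cancellative HR Hc).
  - intro Hrel. exact (left_cancellative_of_letters (cancel_letter_of_rrev Hc Hrel)).
  - intro Htriv. apply left_cancellative_of_letters, (cancel_letter_of_rrev Hc).
    intros s u v Hrel. rewrite (Htriv s u v Hrel). apply rrev_neg_pos_self.
Qed.
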